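(* Let $R$ be a finitely generated unital $K$-algebra with filtration $\mathcal{F}=\{V_i\}_{i\ge1}$, let $e\in R$ be a full idempotent and $S:=eRe$. Then, with respect to the filtration $\mathcal{G}=\{eV_ie\}_{i\ge1}$ of $S$, one has $\mathrm{h}_{\mathrm{alg}}(S,\mathcal{G})\le\mathrm{h}_{\mathrm{alg}}(R,\mathcal{F})$.
   Context: An idempotent $e$ of $R$ is full if $ReR=R$. A filtration of $R$ is an increasing family of subspaces $V_i$ with union $R$ and $V_iV_j\subseteq V_{i+j}$, with finite-dimensional quotients $V_i/V_{i-1}$. $\mathrm{h}_{\mathrm{alg}}(R,\mathcal{F})=0$ if $R$ is finite-dimensional and otherwise $\limsup_n\frac1n\log\dim(V_n/V_{n-1})$. *)

From HB Require Import structures.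
From mathcomp Require Import all_boot all_order all_algebra.
From mathcomp Require Import boolp classical_sets reals ereal sequences exp.
Set Implicit Arguments. Unset Strict Implicit. Unset Printing Implicit Defensive.
Import Order.TTheory GRing.Theory Num.Theory.
Local Open Scope ring_scope.
Local Open Scope classical_set_scope.

Section Defs.
Variables (K : fieldType) (A : algType K).

Definition span_set (s : seq A) : set A :=
  [set x | exists c : 'I_(size s) -> K, x = \sum_(i < size s) c i *: s`_i].

Definition is_subspace (W : set A) : Prop :=
  W 0 /\ (forall x y, W x -> W y -> W (x + y)) /\ (forall (k : K) x, W x -> W (k *: x)).

Definition set_add (U W : set A) : set A := [set u + w | u in U & w in W].

(* the quotient W/U (U a subspace of W) is finite-dimensional, of dimension <= d:
   W is covered by U + span of d elements of W *)
Definition qspan_le (W U : set A) (d : nat) : Prop :=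
  exists s : seq A, size s = d /\ (forall x, x \in s -> W x) /\
    W `<=` set_add U (span_set s).

Definition qfinite (W U : set A) : Prop := exists d, qspan_le W U d.

(* dim (W/U) : least d with W/U spanned by d vectors (0 if infinite-dim) *)
Lemma qfinite_ex (W U : set A) :
  qfinite W U -> exists d, `[< qspan_le W U d >].
Proof. by move=> [d hd]; exists d; apply/asboolP. Qed.

Definition qdim (W U : set A) : nat :=
  match pselect (qfinite W U) with
  | left h => ex_minn (qfinite_ex h)
  | right _ => 0
  end.

Definition fin_dim (C : set A) : Prop := exists s : seq A, C `<=` span_set s /\ (forall x, x \in s -> C x).

Definition fin_gen_alg : Prop :=
  exists s : seq A, forall P : set A,
    P 1 -> (forall x, x \in s -> P x) ->
    (forall x y, P x -> P y -> P (x + y)) -> (forall x y, P x -> P y -> P (x * y)) ->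
    (forall (k : K) x, P x -> P (k *: x)) -> P = setT.

(* filtration {V_i}_{i>=1} of A, indexed by nat with V 0 unused; V_0 := 0 *)
Definition prevV (V : nat -> set A) (n : nat) : set A :=
  if n is n'.+2 then V n'.+1 else [set 0].

Definition is_filtration (V : nat -> set A) : Prop :=
  (forall i, (0 < i)%N -> is_subspace (V i)) /\
  (forall i, (0 < i)%N -> V i `<=` V i.+1) /\
  (forall x, exists i, (0 < i)%N /\ V i x) /\
  (forall i j x y, (0 < i)%N -> (0 < j)%N -> V i x -> V j y -> V (i + j)%N (x * y)) /\
  (forall i, (0 < i)%N -> qfinite (V i) (prevV V i)).

Definition two_sided (e : A) : set A :=
  [set x | exists (n : nat) (a b : 'I_n -> A), x = \sum_(k < n) a k * e * b k].

Definition full_idempotent (e : A) : Prop := e * e = e /\ two_sided e = setT.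

Definition corner (e : A) (C : set A) : set A := [set e * x * e | x in C].

(* algebraic entropy of a filtration V of an algebra whose underlying K-space is C:
   0 if C is finite dimensional, else limsup_n (1/n) log dim(V_n/V_{n-1})
   (with log 0 := -oo) *)
Definition h_alg (RR : realType) (C : set A) (V : nat -> set A) : \bar RR :=
  if `[< fin_dim C >] then 0%E
  else limn_esup (fun n : nat =>
         let d := qdim (V n) (prevV V n) in
         if d == 0%N then -oo%E else ((ln (d%:R : RR)) / n%:R)%:E).

End Defs.

From HB Require Import structures.
From mathcomp Require Import all_boot all_order all_algebra.
From mathcomp Require Import boolp classical_sets reals ereal topology normedtype.
From mathcomp Require Import sequences exp.
Import Order.TTheory GRing.Theory Num.Theory.
Local Open Scope ring_scope.
Local Open Scope classical_set_scope.

(* The map x |-> e x e is K-linear, so it sends a spanning family of V_n modulo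
   V_(n-1) to a spanning family of e V_n e modulo e V_(n-1) e: termwise
   dim(eV_ne / eV_(n-1)e) <= dim(V_n / V_(n-1)), and the limsup inherits the
   inequality.  The remaining case is S finite-dimensional and R not: then
   infinitely many quotients V_n / V_(n-1) are nonzero (otherwise the filtration
   stabilises at a finite-dimensional V_N), so h_alg(R) >= 0 = h_alg(S). *)

Section LimnEsup.
Context {RR : realType}.
Implicit Types (u v : (\bar RR)^nat) (l : \bar RR).
Local Open Scope ereal_scope.

Lemma lee_limn_esup N u v : (forall n, (N <= n)%N -> u n <= v n) ->
  limn_esup u <= limn_esup v.
Proof.
move=> uv; rewrite !limn_esup_lim; apply: lee_lim; try exact: is_cvg_esups.
near=> n; apply: ge_ereal_sup => _ [k /= nk <-].
apply: le_trans (uv k _) _; last by apply: ereal_sup_ubound; exists k.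
by apply: leq_trans nk; near: n; exists N.
Unshelve. all: by end_near. Qed.

Lemma limn_esup_ge_frequently u l : (forall N, exists2 n, (N <= n)%N & l <= u n) ->
  l <= limn_esup u.
Proof.
move=> ul; rewrite limn_esup_lim; apply: lime_ge; first exact: is_cvg_esups.
near=> N; have [n Nn lun] := ul N.
by apply: le_trans lun _; apply: ereal_sup_ubound; exists n.
Unshelve. all: by end_near. Qed.

End LimnEsup.

Section GrowthRate.
Variable RR : realType.
Local Open Scope ereal_scope.

Definition growth_rate (d : nat -> nat) : (\bar RR)^nat := fun n =>
  if d n == 0%N then -oo else (ln (d n)%:R / n%:R)%:E.

Lemma growth_rate_le d d' n : (d' n <= d n)%N -> growth_rate d' n <= growth_rate d n.
Proof.
move=> le_d; rewrite /growth_rate; case: eqP => [_|/eqP d'n0]; first exact: leNye.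
have dn0 : d n != 0%N by apply: contra d'n0; rewrite -!leqn0 => /(leq_trans le_d).
rewrite (negbTE dn0) lee_fin ler_wpM2r ?invr_ge0 ?ler0n //.
by rewrite ler_ln ?ler_nat // posrE ltr0n lt0n.
Qed.

Lemma growth_rate_ge0 d n : d n != 0%N -> 0 <= growth_rate d n.
Proof.
move=> dn0; rewrite /growth_rate (negbTE dn0) lee_fin.
by rewrite mulr_ge0 ?invr_ge0 ?ler0n // ln_ge0 // ler1n lt0n.
Qed.

End GrowthRate.

Section Span.
Context {K : fieldType} {R : algType K}.
Implicit Types (s t : seq R) (x y : R) (W U : set R).

Lemma spanP s x :
  span_set s x <-> exists c : nat -> K, x = \sum_(i < size s) c i *: s`_i.
Proof.
split; last by move=> [c ->]; exists (fun i => c i).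
move=> [c ->]; exists (fun k => if insub k is Some i then c i else 0).
by apply: eq_bigr => i _; rewrite valK.
Qed.

Lemma span_nil x : span_set [::] x -> x = 0.
Proof. by move=> [c ->]; rewrite big_ord0. Qed.

Lemma span_cat s t x y : span_set s x -> span_set t y -> span_set (s ++ t) (x + y).
Proof.
move=> /spanP[c ->] /spanP[d ->]; apply/spanP.
pose c' k := if (k < size s)%N then c k else d (k - size s)%N.
exists c'; rewrite -(big_mkord xpredT (fun i => c' i *: (s ++ t)`_i)) size_cat.
rewrite (@big_cat_nat _ _ _ (size s)) ?leq_addr //=; congr (_ + _).
  by rewrite big_mkord; apply: eq_bigr => i _; rewrite /c' ltn_ord nth_cat ltn_ord.
rewrite -{1}(add0n (size s)) big_addn addKn big_mkord; apply: eq_bigr => i _.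
by rewrite /c' nth_cat ltnNge leq_addl /= addnK.
Qed.

Lemma span_linear (f : {linear R -> R}) s x : span_set s x -> span_set (map f s) (f x).
Proof.
move=> /spanP[c ->]; apply/spanP; exists c; rewrite size_map linear_sum.
by apply: eq_bigr => i _; rewrite linearZ (nth_map 0).
Qed.

Lemma qdimP W U : qfinite W U -> qspan_le W U (qdim W U).
Proof.
by move=> h; rewrite /qdim; case: pselect => // h'; case: ex_minnP => m /asboolP.
Qed.

Lemma qdim_min W U d : qspan_le W U d -> (qdim W U <= d)%N.
Proof.
move=> hd; rewrite /qdim; case: pselect => [h|[]]; last by exists d.
by case: ex_minnP => m _; apply; apply/asboolP.
Qed.

Lemma qdim_eq0_sub W U : qfinite W U -> qdim W U = 0%N -> W `<=` U.
Proof.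
move=> /qdimP + q0; rewrite q0 => -[s [/size0nil -> [_ WUs]]] x.
by move=> /WUs[u Uu [w /span_nil -> <-]]; rewrite addr0.
Qed.

End Span.

Section Corner.
Context {K : fieldType} {R : algType K}.
Variable e : R.
Implicit Types (C W U : set R).

Definition sandwich (x : R) : R := e * x * e.

Lemma sandwich_is_linear : linear sandwich.
Proof. by move=> a x y; rewrite /sandwich mulrDr mulrDl -scalerAr -scalerAl. Qed.

HB.instance Definition _ :=
  GRing.isLinear.Build K R R *:%R sandwich sandwich_is_linear.

Lemma corner0 : corner e [set 0] = [set 0].
Proof.
apply/seteqP; split => [_ [x /= -> <-]|x /= ->]; first by rewrite mulr0 mul0r.
by exists 0; rewrite //= mulr0 mul0r.
Qed.

Lemma corner_prevV (V : nat -> set R) n :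
  prevV (fun i => corner e (V i)) n = corner e (prevV V n).
Proof. by case: n => [|[|n]] //=; rewrite corner0. Qed.

Lemma fin_dim_corner C : fin_dim C -> fin_dim (corner e C).
Proof.
move=> [s [Cs sC]]; exists (map sandwich s); split.
  by move=> _ [x /Cs xs <-]; apply: span_linear.
by move=> _ /mapP[x /sC Cx ->]; exists x.
Qed.

Lemma qspan_le_corner W U d : qspan_le W U d -> qspan_le (corner e W) (corner e U) d.
Proof.
move=> [s [sz [sW WUs]]]; exists (map sandwich s); rewrite size_map; split=> //.
split=> [_ /mapP[x /sW Wx ->]|_ [x /WUs[u Uu [w sw <-]] <-]]; first by exists x.
exists (sandwich u); first by exists u.
by exists (sandwich w); [apply: span_linear | rewrite -linearD].
Qed.

Lemma qdim_corner_le W U : qfinite W U -> (qdim (corner e W) (corner e U) <= qdim W U)%N.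
Proof. by move=> /qdimP/qspan_le_corner/qdim_min. Qed.

End Corner.

Section Filtration.
Context {K : fieldType} {R : algType K} {V : nat -> set R}.
Hypothesis hV : is_filtration V.

Lemma filtration_qfinite n : (0 < n)%N -> qfinite (V n) (prevV V n).
Proof. exact: hV.2.2.2.2. Qed.

Lemma filtration_mono i j : (0 < i)%N -> (i <= j)%N -> V i `<=` V j.
Proof.
move=> i0; elim: j => [|j IH]; first by rewrite leqn0 => /eqP ->.
rewrite leq_eqVlt => /orP[/eqP -> //|ij] x /(IH ij).
exact: hV.2.1 j (leq_trans i0 ij) x.
Qed.

Lemma filtration_span n : (0 < n)%N -> exists t, V n `<=` span_set t.
Proof.
elim: n => // n IH _; have [d [s [_ [_ Vs]]]] := filtration_qfinite n.+1 isT.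
case: n IH Vs => [|n] IH Vs.
  by exists s => x /Vs[u /= -> [w sw <-]]; rewrite add0r.
have [t Vt] := IH isT; exists (t ++ s) => x /Vs[u Vu [w sw <-]].
exact: span_cat (Vt _ Vu) sw.
Qed.

Lemma filtration_stationary N :
  (forall n, (N < n)%N -> qdim (V n) (prevV V n) = 0%N) -> V N.+1 = setT.
Proof.
move=> q0; apply/seteqP; split=> // x _; have [i [i0 Vix]] := hV.2.2.1 x.
suff VN n : (N < n)%N -> V n `<=` V N.+1.
  by apply: (VN (maxn i N.+1)); [rewrite leq_max ltnSn orbT|
    apply: filtration_mono Vix; rewrite ?leq_maxl].
elim: n => // n IH; rewrite ltnS leq_eqVlt => /orP[/eqP <- //|Nn].
have Vprev := qdim_eq0_sub _ _ (filtration_qfinite n.+1 isT) (q0 _ (leqW Nn)).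
by case: n IH Nn Vprev => // n IH Nn Vprev y /Vprev; apply: IH.
Qed.

Lemma filtration_qdim_frequently_neq0 : ~ fin_dim (@setT R) ->
  forall N, exists2 n, (N <= n)%N & qdim (V n) (prevV V n) != 0%N.
Proof.
move=> infR N; apply: contrapT => hN; apply: infR.
have [t Vt] := filtration_span N.+1 isT.
exists t; split=> //; rewrite -(filtration_stationary N) //.
move=> n Nn; apply/eqP; apply: contrapT => qn.
by apply: hN; exists n; [exact: ltnW | exact/negP].
Qed.

End Filtration.

Lemma h_algE (RR : realType) (K : fieldType) (R : algType K) (C : set R) V :
  h_alg RR C V = if `[< fin_dim C >] then 0%E
                 else limn_esup (growth_rate RR (fun n => qdim (V n) (prevV V n))).
Proof. by []. Qed.

Theorem proposition4p10 (RR : realType) (K : fieldType) (R : algType K)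
  (V : nat -> set R) (e : R) :
  fin_gen_alg R -> is_filtration V -> full_idempotent e ->
  (h_alg RR (corner e setT) (fun i => corner e (V i)) <= h_alg RR setT V)%E.
Proof.
move=> _ hV _; rewrite !h_algE.
have [finR|infR] := asboolP (fin_dim (@setT R)).
  by rewrite asboolT //; apply: fin_dim_corner.
case: asboolP => _.
  apply: limn_esup_ge_frequently => N.
  have [n Nn qn] := filtration_qdim_frequently_neq0 hV infR N.
  by exists n => //; apply: growth_rate_ge0.
apply: (lee_limn_esup 1) => n n0; apply: growth_rate_le.
by rewrite corner_prevV; apply/qdim_corner_le/(filtration_qfinite hV n n0).
Qed.
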